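(* Let $n \geq 3$ be an integer and let $D_{2n} = \langle a, b \mid a^n = b^2 = e,\ ab = ba^{-1} \rangle$ be the dihedral group of order $2n$. Then the order supergraph $\mathcal{S}(D_{2n})$ is cyclically separable if and only if all of the following hold: (i) $n$ is not a power of $2$; (ii) $n \geq 5$; (iii) $n \neq 6$ and $n \neq 12$.
   Context: All graphs are simple and undirected. For a finite group $G$, the order supergraph $\mathcal{S}(G)$ is the graph with vertex set $G$ in which two distinct vertices $x,y$ are adjacent if and only if the order of $x$ divides the order of $y$ or the order of $y$ divides the order of $x$. For a graph $\Gamma$, a vertex cutset is a set $S$ of vertices such that $\Gamma - S$ is disconnected; a cyclic vertex cutset is a vertex cutset $S$ such that $\Gamma - S$ has at least two connected components each of which contains a cycle. $\Gamma$ is called cyclically separable if it has a cyclic vertex cutset. *)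

From mathcomp Require Import all_boot all_fingroup all_solvable.
Set Implicit Arguments.
Unset Strict Implicit.
Unset Printing Implicit Defensive.

(* A simple undirected graph on a finite type T: a symmetric irreflexive
   boolean relation [adj].  The vertex set is the whole type T. *)

Definition del_rel (T : finType) (adj : rel T) (S : {set T}) : rel T :=
  [rel x y | [&& x \notin S, y \notin S & adj x y]].

Definition is_graph_cycle (T : finType) (adj : rel T) (c : seq T) : bool :=
  [&& 3 <= size c, uniq c & path.cycle adj c].

Definition comp_has_cycle (T : finType) (adj : rel T) (x : T) : Prop :=
  exists c : seq T, is_graph_cycle adj c /\ all (connect adj x) c.

(* S is a cyclic vertex cutset: Gamma - S has (at least) two distinct
   connected components each of which contains a cycle.  (This forces
   Gamma - S to be disconnected, i.e. S is a vertex cutset.) *)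
Definition cyclic_vertex_cutset (T : finType) (adj : rel T) (S : {set T}) : Prop :=
  exists x y : T, [/\ x \notin S, y \notin S,
    ~~ connect (del_rel adj S) x y,
    comp_has_cycle (del_rel adj S) x & comp_has_cycle (del_rel adj S) y].

Definition cyclically_separable (T : finType) (adj : rel T) : Prop :=
  exists S : {set T}, cyclic_vertex_cutset adj S.

Definition order_supergraph (gT : finGroupType) : rel gT :=
  [rel x y | (x != y) && ((#[x]%g %| #[y]%g) || (#[y]%g %| #[x]%g))].

From mathcomp Require Import all_boot all_fingroup all_solvable.
Set Implicit Arguments. Unset Strict Implicit. Unset Printing Implicit Defensive.

(* Two elements of G are adjacent in S(G) exactly when their orders are
   comparable for divisibility, so S(G) is cyclically separable iff it has two
   cycles such that every order on one is incomparable with every order on the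
   other: deleting all remaining vertices leaves no edge between them.
   In D_2n every element outside the rotation subgroup <x> is an involution.
   If n = 2^k all orders are powers of 2, hence comparable.  If n | 12 all
   orders divide 12, and a finite check shows that one of the two cycles would
   contain three elements all of order 3 or all of order 4; these would generate
   one cyclic subgroup, which has only phi(3) = phi(4) = 2 generators.  In all
   other cases n has an odd divisor d >= 5, and a triangle of reflections is
   separated from the triangle g, g^2, g^-1 with #[g] = d; or 24 | n, and the
   triangles built in the same way on elements of orders 8 and 6 (with orders
   8, 4, 8 and 6, 3, 6) are separated. *)

Definition incomparable (p q : nat) := ~~ (p %| q) && ~~ (q %| p).

Lemma incomparableN p q : ~~ incomparable p q = (p %| q) || (q %| p).
Proof. by rewrite /incomparable negb_and !negbK. Qed.

Lemma incomparableC p q : incomparable p q = incomparable q p.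
Proof. by rewrite /incomparable andbC. Qed.

Lemma dvdn_pfactor_total p k a b :
  prime p -> a %| p ^ k -> b %| p ^ k -> (a %| b) || (b %| a).
Proof.
move=> p_pr /(dvdn_pfactor _ _ p_pr)[i _ ->] /(dvdn_pfactor _ _ p_pr)[j _ ->].
by case: (leqP i j) => [/dvdn_exp2l -> | /ltnW/dvdn_exp2l ->]; rewrite ?orbT.
Qed.

Lemma divisors12_cross_incomparable (s t : seq nat) :
  size s = 3 -> size t = 3 -> all (dvdn^~ 12) (s ++ t) ->
  {in s & t, forall p q, incomparable p q} ->
  [|| all (pred1 3) s, all (pred1 4) s, all (pred1 3) t | all (pred1 4) t].
Proof.
case: s => [|o1 [|o2 [|o3 []]]] // _; case: t => [|p1 [|p2 [|p3 []]]] // _.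
move=> /allP dv12 inc; pose D := divisors 12.
have inD o : o \in [:: o1; o2; o3; p1; p2; p3] -> o \in D.
  by move=> /dv12; rewrite -dvdn_divisors.
have [o1D o2D o3D] : [/\ o1 \in D, o2 \in D & o3 \in D].
  by split; apply: inD; rewrite !inE eqxx ?orbT.
have [p1D p2D p3D] : [/\ p1 \in D, p2 \in D & p3 \in D].
  by split; apply: inD; rewrite !inE eqxx ?orbT.
have check : all (fun o1 => all (fun o2 => all (fun o3 =>
    all (fun p1 => all (fun p2 => all (fun p3 =>
      all (fun o => all (incomparable o) [:: p1; p2; p3]) [:: o1; o2; o3] ==>
      [|| all (pred1 3) [:: o1; o2; o3], all (pred1 4) [:: o1; o2; o3],
          all (pred1 3) [:: p1; p2; p3] | all (pred1 4) [:: p1; p2; p3]])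
    D) D) D) D) D) D by vm_compute.
move: check => /allP/(_ _ o1D)/allP/(_ _ o2D)/allP/(_ _ o3D).
move=> /allP/(_ _ p1D)/allP/(_ _ p2D)/allP/(_ _ p3D)/implyP; apply.
by apply/allP=> o os; apply/allP=> p pt; apply: inc.
Qed.

Lemma ndvdn12_gt2 n : 2 < n -> ~~ (n %| 12) = [&& 4 < n, n != 6 & n != 12].
Proof.
have D12 : divisors 12 = [:: 1; 2; 3; 4; 6; 12] by [].
rewrite dvdn_divisors // D12 !inE.
by case: n => [|[|[|[|[|n]]]]] //= _; rewrite negb_or.
Qed.

Lemma odd_divisor_or_dvdn24 n : 0 < n -> ~ (exists k, n = 2 ^ k) -> ~~ (n %| 12) ->
  (exists d, [&& odd d, 3 < d & d %| n]) \/ 24 %| n.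
Proof.
move=> n_gt0 not_pow2 n_ndvd12.
have defn : n = 2 ^ logn 2 n * n`_2^' by rewrite -p_part partnC.
have odd_o : odd n`_2^' by rewrite odd_2'nat part_pnat.
case: (ltnP 3 n`_2^') => [o_gt3 | ].
  by left; exists n`_2^'; rewrite odd_o o_gt3 dvdn_part.
have : 0 < n`_2^' := part_gt0 _ _.
move: odd_o defn; case: (n`_2^') => [|[|[|[|]]]] // _ defn _ _.
  by case: not_pow2; exists (logn 2 n); rewrite muln1 in defn.
right; move: n_ndvd12; rewrite defn.
case: (logn 2 n) => [|[|[|k]]] // _.
by rewrite !expnS mulnC !mulnA dvdn_mulr.
Qed.

Section DeletedSubgraph.

Variables (T : finType) (e : rel T) (S : {set T}).

Lemma del_rel_sym : symmetric e -> symmetric (del_rel e S).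
Proof. by move=> e_sym u v; rewrite /del_rel /= e_sym andbCA. Qed.

Lemma connect_del_rel_notin u v :
  connect (del_rel e S) u v -> u \notin S -> v \notin S.
Proof.
have closedS : closed (del_rel e S) [predC S].
  by move=> a b /and3P[aS bS _]; rewrite !inE aS bS.
by move=> /(closed_connect closedS); rewrite !inE => ->.
Qed.

Lemma comp_has_cycle_del_rel x p :
  is_graph_cycle e (x :: p) -> all [predC S] (x :: p) ->
  comp_has_cycle (del_rel e S) x.
Proof.
move=> /and3P[size_c uniq_c cycle_c] notS.
have sub : {in [predC S] &, subrel e (del_rel e S)}.
  by move=> u v; rewrite !inE => uS vS euv; rewrite /del_rel /= uS vS.
exists (x :: p); split.
  by rewrite /is_graph_cycle size_c uniq_c (sub_in_cycle sub notS cycle_c).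
have /path_connect conn : path (del_rel e S) x (rcons p x).
  apply: (sub_in_path sub) cycle_c.
  by rewrite -rcons_cons all_rcons notS andbT (allP notS _ (mem_head x p)).
by apply/allP=> v vc; apply: conn; rewrite -rcons_cons mem_rcons inE vc orbT.
Qed.

End DeletedSubgraph.

Local Open Scope group_scope.

Lemma orderXdivK (gT : finGroupType) (g : gT) d :
  d %| #[g] -> #[g ^+ (#[g] %/ d)] = d.
Proof. by move=> dg; rewrite orderXdiv ?dvdn_div // divnA // mulKn. Qed.

Section OrderSupergraph.

Variable gT : finGroupType.
Local Notation adj := (@order_supergraph gT).

Lemma order_supergraph_sym : symmetric adj.
Proof. by move=> u v; rewrite /order_supergraph /= eq_sym orbC. Qed.

Lemma order_supergraph_triangle a b c :
  adj a b -> adj b c -> adj c a -> is_graph_cycle adj [:: a; b; c].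
Proof.
move=> ab bc ca; apply/and3P; split=> //; last by rewrite /cycle /= ab bc ca.
move: ab bc ca => /andP[ab _] /andP[bc _] /andP[ca _].
by rewrite /= !inE negb_or ab bc eq_sym ca.
Qed.

Lemma power_triangle (g : gT) :
  (3 < #[g])%N -> is_graph_cycle adj [:: g; g ^+ 2; g^-1].
Proof.
move=> og; apply: order_supergraph_triangle;
  rewrite /order_supergraph /= ?orderV ?orderXdvd ?dvdnn ?orbT !andbT.
- by rewrite -{1}(expg1 g) eq_expg_mod_order !modn_small // ltnW // ltnW.
- by rewrite eq_sym eq_invg_mul -expgS -order_dvdn gtnNdvd.
- by rewrite eq_invg_mul -(expgS g 1) -order_dvdn gtnNdvd // ltnW.
Qed.

Theorem separable_order_supergraphP :
  cyclically_separable adj <->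
  exists c d : seq gT, [/\ is_graph_cycle adj c, is_graph_cycle adj d &
    {in c & d, forall a b, incomparable #[a] #[b]}].
Proof.
split.
- case=> S [x [y [xS yS not_xy [c [cyc_c conn_c]] [d [cyc_d conn_d]]]]].
  have sub : subrel (del_rel adj S) adj by move=> u v /and3P[].
  have cycle_adj s : is_graph_cycle (del_rel adj S) s -> is_graph_cycle adj s.
    by case/and3P=> size_s uniq_s cyc_s; rewrite /is_graph_cycle size_s uniq_s (sub_cycle sub).
  exists c, d; split; rewrite ?cycle_adj // => a b ac bd.
  apply: contraNT not_xy; rewrite incomparableN => cmp_ab.
  have xa := allP conn_c a ac; have yb := allP conn_d b bd.
  have aS := connect_del_rel_notin xa xS; have bS := connect_del_rel_notin yb yS.
  have ab : connect (del_rel adj S) a b.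
    have [-> // | a_neq_b] := eqVneq a b.
    by apply: connect1; rewrite /del_rel /order_supergraph /= aS bS a_neq_b.
  have csym := sym_connect_sym (del_rel_sym S order_supergraph_sym).
  by apply: connect_trans xa (connect_trans ab _); rewrite csym.
- case=> [[|a c]] [[|b d]] [] // cyc_c cyc_d inc.
  pose S := [set v | v \notin (a :: c) ++ (b :: d)].
  have notS s : {subset s <= (a :: c) ++ (b :: d)} -> all [predC S] s.
    by move=> sub_s; apply/allP=> v /sub_s; rewrite /= in_set negbK.
  exists S, a, b; split.
  + by rewrite in_set negbK mem_head.
  + by rewrite in_set negbK mem_cat mem_head orbT.
  + suff closed_c : closed (del_rel adj S) (a :: c).
      apply/negP=> /(closed_connect closed_c); rewrite mem_head => /esym bc.
      by move: (inc b b bc (mem_head b d)); rewrite /incomparable dvdnn.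
    move=> u v /and3P[]; rewrite !in_set !negbK !mem_cat => uS vS /andP[_].
    rewrite -incomparableN => cmp.
    have [uc|ud] := boolP (u \in a :: c); have [vc|vd] := boolP (v \in a :: c) => //.
      by case/negP: cmp; apply: inc => //; case/orP: vS => // vc; rewrite vc in vd.
    case/negP: cmp; rewrite incomparableC; apply: inc => //.
    by case/orP: uS => // uc; rewrite uc in ud.
  + by apply: comp_has_cycle_del_rel cyc_c _; apply: notS => v; rewrite mem_cat => ->.
  + by apply: comp_has_cycle_del_rel cyc_d _; apply: notS => v; rewrite mem_cat orbC => ->.
Qed.

Lemma separable_of_order_dvdn24 (g : gT) : (24 %| #[g])%N -> cyclically_separable adj.
Proof.
move=> g24; pose u := g ^+ (#[g] %/ 8); pose v := g ^+ (#[g] %/ 6).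
have ou : #[u] = 8 by rewrite orderXdivK ?(dvdn_trans _ g24).
have ov : #[v] = 6 by rewrite orderXdivK ?(dvdn_trans _ g24).
have ou2 : #[u ^+ 2] = 4 by rewrite orderXdiv ou.
have ov2 : #[v ^+ 2] = 3 by rewrite orderXdiv ov.
apply/separable_order_supergraphP.
exists [:: u; u ^+ 2; u^-1], [:: v; v ^+ 2; v^-1]; split.
- by apply: power_triangle; rewrite ou.
- by apply: power_triangle; rewrite ov.
- move=> a b; rewrite !inE => /or3P[]/eqP-> /or3P[]/eqP->;
    by rewrite ?orderV ?ou ?ou2 ?ov ?ov2.
Qed.

End OrderSupergraph.

Section CyclicAndInvolutions.

Variables (gT : finGroupType) (x y : gT) (n : nat).
Hypotheses (ox : #[x] = n) (notXy : y \notin <[x]>)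
  (involutions : forall g, g \notin <[x]> -> #[g] = 2).

Local Notation adj := (@order_supergraph gT).

Lemma order_dvdn_common_multiple (g : gT) m : (n %| m)%N -> (2 %| m)%N -> #[g] %| m.
Proof.
move=> nm twom; have [gx | /involutions -> //] := boolP (g \in <[x]>).
by apply: dvdn_trans nm; rewrite -ox [#[x]]orderE order_dvdG.
Qed.

Lemma uniq_order_le_totient (s : seq gT) d :
  d != 2 -> uniq s -> all (pred1 d) [seq #[g] | g <- s] -> (size s <= totient d)%N.
Proof.
case: s => [|a s] // d_neq2 uniq_s /allP ord_s.
have ord g : g \in a :: s -> #[g] = d by move=> gs; apply/eqP; exact: ord_s (map_f _ gs).
have inX g : g \in a :: s -> g \in <[x]>.
  by move=> gs; apply: contraR d_neq2 => /involutions <-; rewrite ord.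
have gen g : g \in a :: s -> generator <[a]> g.
  move=> gs; rewrite /generator (eq_subG_cyclic (cycle_cyclic x)) ?cycle_subG ?inX //.
    by rewrite -!orderE !ord ?mem_head.
  exact: mem_head.
rewrite -(ord a (mem_head a s)) totient_gen cardE.
by apply: uniq_leq_size uniq_s _ => g /gen; rewrite mem_enum inE.
Qed.

Lemma reflection_order i : #[x ^+ i * y] = 2.
Proof. by apply: involutions; rewrite groupMl ?mem_cycle. Qed.

Lemma reflection_triangle : (2 < n)%N -> is_graph_cycle adj [:: y; x * y; x ^+ 2 * y].
Proof.
move=> n_gt2.
have adj_refl i j : (i < j < n)%N -> adj (x ^+ i * y) (x ^+ j * y).
  case/andP=> ij jn; rewrite /order_supergraph /= !reflection_order dvdnn andbT.
  rewrite (can_eq (mulgK y)) eq_expg_mod_order ox.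
  by rewrite !modn_small ?(ltn_trans ij) // neq_ltn ij.
have a01 := adj_refl 0%N 1%N (ltn_trans (ltnSn 1) n_gt2).
have a12 := adj_refl 1%N 2%N n_gt2; have a02 := adj_refl 0%N 2%N n_gt2.
rewrite expg0 mul1g expg1 in a01 a02 a12.
by apply: order_supergraph_triangle; rewrite // order_supergraph_sym.
Qed.

Lemma not_separable_of_pow2 k : n = (2 ^ k)%N -> ~ cyclically_separable adj.
Proof.
move=> nk /separable_order_supergraphP [c [d [/and3P[c3 _ _] /and3P[d3 _ _] inc]]].
case: c c3 inc => [|a c] // _; case: d d3 => [|b d] // _.
move=> /(_ a b (mem_head _ _) (mem_head _ _)).
have dv (g : gT) : #[g] %| (2 ^ k.+1)%N.
  apply: order_dvdn_common_multiple; rewrite expnS.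
    by rewrite nk dvdn_mull.
  by rewrite dvdn_mulr.
by apply/negP; rewrite incomparableN (dvdn_pfactor_total _ (dv a) (dv b)).
Qed.

Lemma not_separable_of_dvdn12 : (n %| 12)%N -> ~ cyclically_separable adj.
Proof.
move=> n12 /separable_order_supergraphP [c [d [/and3P[c3 uc _] /and3P[d3 ud _] inc]]].
pose orders3 (s : seq gT) := [seq #[g] | g <- take 3 s].
have size_orders3 (s : seq gT) : (3 <= size s)%N -> size (orders3 s) = 3.
  by move=> s3; rewrite size_map size_takel.
have few (s : seq gT) o : uniq s -> (3 <= size s)%N -> o \in [:: 3; 4] ->
    ~~ all (pred1 o) (orders3 s).
  move=> us s3 o34; apply/negP => /(uniq_order_le_totient _ (take_uniq 3 us)).
  by rewrite size_takel //; move: o34; rewrite !inE => /orP[] /eqP -> /(_ isT).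
have dv12 : all (dvdn^~ 12) (orders3 c ++ orders3 d).
  by rewrite -map_cat; apply/allP => _ /mapP[g _ ->]; apply: order_dvdn_common_multiple.
have inc3 : {in orders3 c & orders3 d, forall p q, incomparable p q}.
  by move=> _ _ /mapP[a /mem_take ac ->] /mapP[b /mem_take bd ->]; apply: inc.
have := divisors12_cross_incomparable (size_orders3 c c3) (size_orders3 d d3) dv12 inc3.
by case/or4P; apply/negP; apply: few.
Qed.

Lemma separable_of_odd_divisor d :
  (2 < n)%N -> odd d -> (3 < d)%N -> (d %| n)%N -> cyclically_separable adj.
Proof.
move=> n_gt2 odd_d d_gt3 dn; pose g := x ^+ (n %/ d).
have og : #[g] = d by rewrite /g -ox orderXdivK ?ox.
have og2 : #[g ^+ 2] = d.
  by rewrite orderXgcd og; move: odd_d; rewrite -coprimen2 => /eqP ->; rewrite divn1.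
have oy : #[y] = 2 := involutions notXy; have oxy : #[x * y] = 2 := reflection_order 1.
have inc2d : incomparable 2 d by rewrite /incomparable dvdn2 odd_d gtnNdvd // ltnW.
apply/separable_order_supergraphP.
exists [:: y; x * y; x ^+ 2 * y], [:: g; g ^+ 2; g^-1]; split.
- exact: reflection_triangle.
- by apply: power_triangle; rewrite og.
- move=> a b; rewrite !inE => /or3P[]/eqP-> /or3P[]/eqP->;
    by rewrite ?orderV ?og ?og2 ?oy ?oxy ?reflection_order.
Qed.

End CyclicAndInvolutions.

Lemma dihedral_generators n : (1 < n)%N -> exists x y : 'D_(n.*2),
  [/\ #[x] = n, y \notin <[x]> & forall g, g \notin <[x]> -> #[g] = 2].
Proof.
move=> n_gt1; have := isog_refl ('D_(n.*2))%G.
case/(isoGrpP _ (Grp_dihedral n_gt1)) => _ /existsP[[x y] /= /eqP[defG xn y2 xy]].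
have defXY : <[x]> * <[y]> = [set: 'D_(n.*2)].
  by rewrite -norm_joinEr // ?norms_cycle ?xy ?groupV ?cycle_id.
have n_lt_2n : (n < n.*2)%N by rewrite -addnn -{1}(addn0 n) ltn_add2l ltnW.
have notXy : y \notin <[x]>.
  apply: contraL n_lt_2n => Xy; rewrite -leqNgt -(card_dihedral n_gt1) -defXY.
  by rewrite mulGSid ?cycle_subG // dvdn_leq ?(ltnW n_gt1) // order_dvdn xn.
have oy : #[y] = 2 by apply: nt_prime_order (group1_contra notXy).
exists x, y; split=> // [|g notXg].
  apply: double_inj; rewrite -muln2 -oy.
  transitivity #|[set: 'D_(n.*2)]|; last exact: card_dihedral.
  rewrite -defXY TI_cardMg -?orderE //.
  by rewrite setIC prime_TIg ?cycle_subG // -orderE oy.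
have /mulsgP[u v Xu] : g \in <[x]> * <[y]> by rewrite defXY inE.
rewrite cycle2g // !inE => /orP[] /eqP-> def_g; first by rewrite def_g mulg1 Xu in notXg.
apply: nt_prime_order => //; last by apply: contraNneq notXg => ->.
have yV : y^-1 = y by apply/eqP; rewrite eq_invg_mul -(expgS y 1) y2.
case/cycleP: Xu def_g => i -> ->.
have conj_xi : y * x ^+ i * y = (x ^+ i)^-1.
  by rewrite -{1}yV -mulgA -conjgE conjXg xy expgVn.
by rewrite expgS expg1 -mulgA (mulgA y) conj_xi mulgV.
Qed.

Local Close Scope group_scope.

Theorem mainTheorem1 (n : nat) (hn : 3 <= n) :
  cyclically_separable (@order_supergraph ('D_(n.*2))%type) <->
  [/\ ~ (exists k, n = 2 ^ k), 5 <= n & (n != 6) && (n != 12)].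
Proof.
have [x [y [ox notXy involutions]]] := dihedral_generators (ltnW hn).
have n12E := ndvdn12_gt2 hn.
split=> [sep | [not_pow2 n_ge5 n_neq]].
  have n_ndvd12 : ~~ (n %| 12).
    by apply/negP=> n12; exact: (not_separable_of_dvdn12 ox involutions n12).
  move: n_ndvd12; rewrite n12E => /andP[-> ->]; split=> // -[k nk].
  exact: (not_separable_of_pow2 ox involutions nk).
have n_ndvd12 : ~~ (n %| 12) by rewrite n12E n_ge5.
have n_gt0 : 0 < n by apply: leq_trans hn.
have [[d /and3P[odd_d d_gt3 dn]] | n24] := odd_divisor_or_dvdn24 n_gt0 not_pow2 n_ndvd12.
  exact: (separable_of_odd_divisor ox notXy involutions hn odd_d d_gt3 dn).
by apply: (separable_of_order_dvdn24 (g := x)); rewrite ox.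
Qed.
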